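(* Let $(\nu_n)_{n\ge1}$ be a sequence of probability measures on $\mathbb{Z}$. The following are equivalent: (1) for every $\delta>0$, $\displaystyle\limsup_{n\to\infty}\ \sup_{\delta<|t|\le 1/2}|\hat{\nu}_n(t)|<1$; (2) there exist a constant $C>0$ and an integer $N_0$ such that $|\hat{\nu}_n(t)|\le e^{-Ct^2}$ for all $n>N_0$ and all $t\in[-1/2,1/2)$.
   Context: The Fourier transform of a probability measure $\nu$ on $\mathbb{Z}$ is $\hat{\nu}(t)=\sum_{k\in\mathbb{Z}}\nu(k)e^{2\pi ikt}$, $t\in[-1/2,1/2)$. *)

From Stdlib Require Import Reals ZArith ClassicalEpsilon.
Open Scope R_scope.

(* A probability measure on Z, given by its mass function.  The two-sided
   series sum_{k in Z} nu k is enumerated as sum_{n>=0} (nu n + nu (-n-1)). *)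
Definition is_prob_Z (nu : Z -> R) : Prop :=
  (forall k, 0 <= nu k) /\
  infinite_sum (fun n => nu (Z.of_nat n) + nu (- Z.of_nat (S n))%Z) 1.

Definition series (a : nat -> R) : R :=
  epsilon (inhabits 0) (fun l => infinite_sum a l).

(* Real and imaginary parts of hat nu (t) = sum_k nu k e^{2 pi i k t}. *)
Definition fourier_re (nu : Z -> R) (t : R) : R :=
  series (fun n =>
    nu (Z.of_nat n) * cos (2 * PI * IZR (Z.of_nat n) * t)
    + nu (- Z.of_nat (S n))%Z * cos (2 * PI * IZR (- Z.of_nat (S n))%Z * t)).

Definition fourier_im (nu : Z -> R) (t : R) : R :=
  series (fun n =>
    nu (Z.of_nat n) * sin (2 * PI * IZR (Z.of_nat n) * t)
    + nu (- Z.of_nat (S n))%Z * sin (2 * PI * IZR (- Z.of_nat (S n))%Z * t)).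

Definition fourier_abs (nu : Z -> R) (t : R) : R :=
  sqrt (fourier_re nu t ^ 2 + fourier_im nu t ^ 2).

(* Write [phi] for [fourier_abs nu].  Choosing a unit vector that realises the modulus of
   [hat nu (t)], the defect [1 - phi t] becomes an average of [1 - cos] over the angles
   [2 pi k t]; since [1 - cos (2 x) <= 4 (1 - cos x)], the defect at most quadruples when [t]
   is doubled.  A lower bound [1 - phi t >= m] on [1/4 < |t| <= 1/2], which is condition (1)
   with [delta = 1/4], therefore propagates through the dyadic shells [2^(-k-2) < |t|] as
   [1 - phi t >= m t^2], and [1 - m t^2 <= exp (- m t^2)] gives (2).  The converse is the
   monotonicity of [exp (- C t^2)] in [|t|], plus the evenness of [phi] for the endpoint
   [t = 1/2]. *)
From Stdlib Require Import Reals ZArith Lra Lia Psatz ClassicalEpsilon.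
Open Scope R_scope.

Lemma infinite_sum_ext (f g : nat -> R) (l : R) :
  (forall n, f n = g n) -> infinite_sum f l -> infinite_sum g l.
Proof.
  intros E H eps Heps. destruct (H eps Heps) as [N HN]. exists N. intros n Hn.
  rewrite <- (sum_eq f g n (fun i _ => E i)). auto.
Qed.

Lemma infinite_sum_plus (f g : nat -> R) (l m : R) :
  infinite_sum f l -> infinite_sum g m -> infinite_sum (fun n => f n + g n) (l + m).
Proof.
  intros Hf Hg eps Heps.
  destruct (CV_plus (sum_f_R0 f) (sum_f_R0 g) l m Hf Hg eps Heps) as [N HN].
  exists N. intros n Hn. rewrite plus_sum. exact (HN n Hn).
Qed.

Lemma infinite_sum_scal (a : R) (f : nat -> R) (l : R) :
  infinite_sum f l -> infinite_sum (fun n => a * f n) (a * l).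
Proof.
  intros Hf.
  assert (Ha : Un_cv (fun _ => a) a).
  { intros eps Heps. exists 0%nat. intros. rewrite Rdist_eq. lra. }
  intros eps Heps. destruct (CV_mult _ (sum_f_R0 f) a l Ha Hf eps Heps) as [N HN].
  exists N. intros n Hn.
  rewrite (sum_eq _ (fun i => f i * a)) by (intros; apply Rmult_comm).
  rewrite <- scal_sum. exact (HN n Hn).
Qed.

Lemma infinite_sum_le (f g : nat -> R) (l m : R) :
  (forall n, f n <= g n) -> infinite_sum f l -> infinite_sum g m -> l <= m.
Proof.
  intros H Hf Hg. refine (Rle_cv_lim _ Hf Hg).
  intro N. apply sum_Rle. auto.
Qed.

Lemma infinite_sum_dominated (f p : nat -> R) (L : R) :
  (forall n, Rabs (f n) <= p n) -> infinite_sum p L -> exists l, infinite_sum f l.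
Proof.
  intros Hfp Hp.
  assert (Hb : forall n, - p n <= f n <= p n) by (intro n; specialize (Hfp n); revert Hfp; unfold Rabs; destruct Rcase_abs; lra).
  assert (Hbound : forall n, 0 <= f n + p n <= 2 * p n) by (intro n; specialize (Hb n); lra).
  destruct (Rseries_CV_comp _ _ Hbound (exist _ (2 * L) (infinite_sum_scal 2 p L Hp)))
    as [l Hl].
  exists (l + -1 * L).
  apply infinite_sum_ext with (fun n => (f n + p n) + -1 * p n).
  - intro n. ring.
  - apply infinite_sum_plus; [exact Hl | apply infinite_sum_scal, Hp].
Qed.

Lemma infinite_sum_series (f : nat -> R) :
  (exists l, infinite_sum f l) -> infinite_sum f (series f).
Proof. exact (epsilon_spec (inhabits 0) (fun l => infinite_sum f l)). Qed.

Lemma unit_dot_le_norm (a b x y : R) :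
  a ^ 2 + b ^ 2 = 1 -> a * x + b * y <= sqrt (x ^ 2 + y ^ 2).
Proof.
  intros Hab. destruct (Rle_dec (a * x + b * y) 0).
  - pose proof (sqrt_pos (x ^ 2 + y ^ 2)). lra.
  - rewrite <- (sqrt_pow2 (a * x + b * y)) by lra. apply sqrt_le_1_alt.
    assert (E : (a ^ 2 + b ^ 2) * (x ^ 2 + y ^ 2) - (a * x + b * y) ^ 2 = (a * y - b * x) ^ 2)
      by ring.
    rewrite Hab in E. pose proof (pow2_ge_0 (a * y - b * x)). lra.
Qed.

Lemma exists_unit_dot_eq_norm (x y : R) :
  exists a b, a ^ 2 + b ^ 2 = 1 /\ a * x + b * y = sqrt (x ^ 2 + y ^ 2).
Proof.
  set (r := sqrt (x ^ 2 + y ^ 2)).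
  assert (Hr : r * r = x ^ 2 + y ^ 2) by (apply sqrt_sqrt; nra).
  destruct (Req_dec r 0) as [r0 | rn0].
  - exists 1, 0. split; [ring |]. rewrite r0 in Hr. nra.
  - exists (x / r), (y / r). split; field_simplify; auto; rewrite <- Hr; field; auto.
Qed.

(* [1 - cos (2 theta) <= 4 (1 - cos theta)], where [theta] is the angle between the unit vectors
   [(c, s)] and [(C, S)], and doubling both angles doubles [theta]. *)
Lemma unit_dot_double (c s C S : R) :
  c ^ 2 + s ^ 2 = 1 -> C ^ 2 + S ^ 2 = 1 ->
  1 - ((c ^ 2 - s ^ 2) * (C ^ 2 - S ^ 2) + (2 * c * s) * (2 * S * C))
    <= 4 * (1 - (c * C + s * S)).
Proof.
  intros Hcs HCS.
  set (d := c * C + s * S).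
  assert (Hd : d ^ 2 + (c * S - s * C) ^ 2 = 1).
  { unfold d. replace 1 with ((c ^ 2 + s ^ 2) * (C ^ 2 + S ^ 2)) by (rewrite Hcs, HCS; ring).
    ring. }
  assert (E : (c ^ 2 - s ^ 2) * (C ^ 2 - S ^ 2) + (2 * c * s) * (2 * S * C)
              = d ^ 2 - (c * S - s * C) ^ 2) by (unfold d; ring).
  rewrite E. pose proof (pow2_ge_0 (1 - d)). nra.
Qed.

Lemma cos_sin_sq (x : R) : cos x ^ 2 + sin x ^ 2 = 1.
Proof. pose proof (sin2_cos2 x). unfold Rsqr in *. lra. Qed.

(* The two-sided series [sum_k nu k * g k], enumerated as in [is_prob_Z]: [fourier_re nu t]
   is definitionally [series (expect_terms nu (fun k => cos (2 * PI * IZR k * t)))]. *)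
Definition expect_terms (nu g : Z -> R) (n : nat) : R :=
  nu (Z.of_nat n) * g (Z.of_nat n) + nu (- Z.of_nat (S n))%Z * g (- Z.of_nat (S n))%Z.

Section Expectation.

Variable nu : Z -> R.
Hypothesis Hnu : is_prob_Z nu.

Lemma expect_terms_const (a : R) : infinite_sum (expect_terms nu (fun _ => a)) a.
Proof.
  destruct Hnu as [_ Hsum].
  pose proof (infinite_sum_scal a _ _ Hsum) as H. rewrite Rmult_1_r in H.
  refine (infinite_sum_ext _ _ _ (fun n => _) H). unfold expect_terms. ring.
Qed.

Lemma expect_terms_affine (a b c : R) (g h : Z -> R) (lg lh : R) :
  infinite_sum (expect_terms nu g) lg -> infinite_sum (expect_terms nu h) lh ->
  infinite_sum (expect_terms nu (fun k => a + b * g k + c * h k)) (a + b * lg + c * lh).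
Proof.
  intros Hg Hh.
  apply infinite_sum_ext
    with (fun n => expect_terms nu (fun _ => a) n + b * expect_terms nu g n
                   + c * expect_terms nu h n).
  - intro n. unfold expect_terms. ring.
  - repeat apply infinite_sum_plus; try apply infinite_sum_scal; auto.
    apply expect_terms_const.
Qed.

Lemma expect_terms_le (g h : Z -> R) (lg lh : R) :
  (forall k, g k <= h k) ->
  infinite_sum (expect_terms nu g) lg -> infinite_sum (expect_terms nu h) lh -> lg <= lh.
Proof.
  destruct Hnu as [Hpos _]. intros Hgh. apply infinite_sum_le. intro n.
  unfold expect_terms.
  apply Rplus_le_compat; apply Rmult_le_compat_l; auto.
Qed.

Lemma expect_terms_series (g : Z -> R) :
  (forall k, Rabs (g k) <= 1) -> infinite_sum (expect_terms nu g) (series (expect_terms nu g)).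
Proof.
  destruct Hnu as [Hpos Hsum]. intros Hg. apply infinite_sum_series.
  refine (infinite_sum_dominated _ _ _ (fun n => _) Hsum).
  unfold expect_terms. eapply Rle_trans; [apply Rabs_triang |].
  rewrite !Rabs_mult, !(Rabs_pos_eq (nu _)) by auto.
  pose proof (Hg (Z.of_nat n)). pose proof (Hg (- Z.of_nat (S n))%Z).
  pose proof (Hpos (Z.of_nat n)). pose proof (Hpos (- Z.of_nat (S n))%Z). nra.
Qed.

Lemma fourier_re_sum (t : R) :
  infinite_sum (expect_terms nu (fun k => cos (2 * PI * IZR k * t))) (fourier_re nu t).
Proof.
  apply expect_terms_series. intro k. apply Rabs_le, COS_bound.
Qed.

Lemma fourier_im_sum (t : R) :
  infinite_sum (expect_terms nu (fun k => sin (2 * PI * IZR k * t))) (fourier_im nu t).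
Proof.
  apply expect_terms_series. intro k. apply Rabs_le, SIN_bound.
Qed.

Lemma fourier_proj_le_1 (c s t : R) :
  c ^ 2 + s ^ 2 = 1 -> c * fourier_re nu t + s * fourier_im nu t <= 1.
Proof.
  intros Hcs.
  pose proof (expect_terms_affine 0 c s _ _ _ _ (fourier_re_sum t) (fourier_im_sum t)) as H.
  assert (Hpt : forall k, 0 + c * cos (2 * PI * IZR k * t) + s * sin (2 * PI * IZR k * t) <= 1).
  { intro k.
    pose proof (unit_dot_le_norm c s (cos (2 * PI * IZR k * t)) (sin (2 * PI * IZR k * t)) Hcs).
    rewrite cos_sin_sq, sqrt_1 in *. lra. }
  pose proof (expect_terms_le _ _ _ _ Hpt H (expect_terms_const 1)). lra.
Qed.

Lemma fourier_abs_le_1 (t : R) : fourier_abs nu t <= 1.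
Proof.
  destruct (exists_unit_dot_eq_norm (fourier_re nu t) (fourier_im nu t)) as [c [s [Hcs E]]].
  unfold fourier_abs. rewrite <- E. exact (fourier_proj_le_1 c s t Hcs).
Qed.

Lemma fourier_proj_double (c s t : R) :
  c ^ 2 + s ^ 2 = 1 ->
  1 - ((c ^ 2 - s ^ 2) * fourier_re nu (2 * t) + (2 * c * s) * fourier_im nu (2 * t))
    <= 4 * (1 - (c * fourier_re nu t + s * fourier_im nu t)).
Proof.
  intros Hcs.
  pose proof (expect_terms_affine 1 (- (c ^ 2 - s ^ 2)) (- (2 * c * s)) _ _ _ _
                (fourier_re_sum (2 * t)) (fourier_im_sum (2 * t))) as H2.
  pose proof (expect_terms_affine 4 (- 4 * c) (- 4 * s) _ _ _ _
                (fourier_re_sum t) (fourier_im_sum t)) as H1.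
  enough (1 + - (c ^ 2 - s ^ 2) * fourier_re nu (2 * t) + - (2 * c * s) * fourier_im nu (2 * t)
          <= 4 + - 4 * c * fourier_re nu t + - 4 * s * fourier_im nu t) by lra.
  refine (expect_terms_le _ _ _ _ (fun k => _) H2 H1). cbv beta.
  replace (2 * PI * IZR k * (2 * t)) with (2 * (2 * PI * IZR k * t)) by ring.
  rewrite cos_2a, sin_2a.
  pose proof (unit_dot_double c s _ _ Hcs (cos_sin_sq (2 * PI * IZR k * t))). nra.
Qed.

Lemma fourier_abs_double (t : R) :
  1 - fourier_abs nu (2 * t) <= 4 * (1 - fourier_abs nu t).
Proof.
  destruct (exists_unit_dot_eq_norm (fourier_re nu t) (fourier_im nu t)) as [c [s [Hcs E]]].
  assert (Hcs2 : (c ^ 2 - s ^ 2) ^ 2 + (2 * c * s) ^ 2 = 1).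
  { replace 1 with ((c ^ 2 + s ^ 2) ^ 2) by (rewrite Hcs; ring). ring. }
  pose proof (unit_dot_le_norm _ _ (fourier_re nu (2 * t)) (fourier_im nu (2 * t)) Hcs2).
  pose proof (fourier_proj_double c s t Hcs).
  unfold fourier_abs. lra.
Qed.

Lemma fourier_abs_opp (t : R) : fourier_abs nu (- t) = fourier_abs nu t.
Proof.
  assert (Hre : fourier_re nu (- t) = fourier_re nu t).
  { apply (uniqueness_sum _ _ _ (fourier_re_sum (- t))).
    refine (infinite_sum_ext _ _ _ (fun n => _) (fourier_re_sum t)).
    unfold expect_terms. rewrite <- !(cos_neg (2 * PI * IZR _ * t)).
    do 2 f_equal; f_equal; f_equal; ring. }
  assert (Him : fourier_im nu (- t) = - fourier_im nu t).
  { apply (uniqueness_sum _ _ _ (fourier_im_sum (- t))).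
    pose proof (expect_terms_affine 0 (-1) 0 _ _ _ _ (fourier_im_sum t) (fourier_im_sum t)) as H.
    replace (- fourier_im nu t) with (0 + -1 * fourier_im nu t + 0 * fourier_im nu t) by ring.
    refine (infinite_sum_ext _ _ _ (fun n => _) H).
    unfold expect_terms.
    replace (2 * PI * IZR (Z.of_nat n) * - t) with (- (2 * PI * IZR (Z.of_nat n) * t)) by ring.
    replace (2 * PI * IZR (- Z.of_nat (S n)) * - t)
      with (- (2 * PI * IZR (- Z.of_nat (S n)) * t)) by ring.
    rewrite !sin_neg. ring. }
  unfold fourier_abs. rewrite Hre, Him. f_equal. ring.
Qed.

End Expectation.

Section Doubling.

Variables (g : R -> R) (m : R).
Hypothesis m_ge0 : 0 <= m.
Hypothesis g_ge0 : forall t, 0 <= g t.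
Hypothesis g_double : forall t, g (2 * t) <= 4 * g t.
Hypothesis g_outer : forall t, 1/4 < Rabs t <= 1/2 -> m <= g t.

Lemma doubling_bound_dyadic (k : nat) (t : R) :
  (1/2) ^ (k + 2) < Rabs t <= 1/2 -> m * t ^ 2 <= g t.
Proof.
  revert t. induction k as [| k IHk]; intros t Ht.
  - assert (t ^ 2 <= 1/4) by (rewrite <- pow2_abs; pose proof (Rabs_pos t); nra).
    pose proof (g_outer t ltac:(simpl in Ht; lra)). nra.
  - set (e := (1/2) ^ (k + 2)) in *.
    assert (He : 0 < e <= 1/4).
    { unfold e. rewrite pow_add. split; [apply Rmult_lt_0_compat; [apply pow_lt |]; lra |].
      pose proof (pow_incr (1/2) 1 k ltac:(lra)) as Hk. rewrite pow1 in Hk. simpl. lra. }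
    replace ((1/2) ^ (S k + 2)) with (e / 2) in Ht by (unfold e; simpl; field).
    destruct (Rlt_or_le e (Rabs t)) as [Hlt | Hle].
    + apply IHk. lra.
    + assert (A2 : Rabs (2 * t) = 2 * Rabs t) by (rewrite Rabs_mult, Rabs_right; lra).
      pose proof (IHk (2 * t) ltac:(rewrite A2; lra)).
      pose proof (g_double t). nra.
Qed.

Lemma doubling_bound (t : R) : Rabs t <= 1/2 -> m * t ^ 2 <= g t.
Proof.
  intros Ht. destruct (Req_dec t 0) as [-> | Ht0].
  - pose proof (g_ge0 0). lra.
  - destruct (pow_lt_1_zero (1/2) ltac:(rewrite Rabs_right; lra) (Rabs t)
                (Rabs_pos_lt t Ht0)) as [k Hk].
    apply (doubling_bound_dyadic k). split; [| exact Ht].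
    specialize (Hk k (le_n k)). rewrite Rabs_right in Hk by (apply Rle_ge, pow_le; lra).
    rewrite pow_add. pose proof (pow_le (1/2) k). nra.
Qed.

End Doubling.

Theorem lemma2p1p7 (nu : nat -> Z -> R)
  (Hnu : forall n : nat, (1 <= n)%nat -> is_prob_Z (nu n)) :
  (forall delta : R, 0 < delta ->
     exists r : R, r < 1 /\
       exists N : nat, forall n : nat, (N < n)%nat ->
         forall t : R, delta < Rabs t <= 1/2 -> fourier_abs (nu n) t <= r)
  <->
  (exists C : R, 0 < C /\
     exists N0 : nat, forall n : nat, (N0 < n)%nat ->
       forall t : R, -(1/2) <= t < 1/2 ->
         fourier_abs (nu n) t <= exp (- C * t ^ 2)).
Proof.
  split.
  - intros H1. destruct (H1 (1/4) ltac:(lra)) as [r [Hr [N HN]]].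
    exists (1 - r). split; [lra |]. exists N. intros n Hn t Ht.
    assert (Hp : is_prob_Z (nu n)) by (apply Hnu; lia).
    assert (Hdefect : (1 - r) * t ^ 2 <= 1 - fourier_abs (nu n) t).
    { apply (doubling_bound (fun u => 1 - fourier_abs (nu n) u));
        [lra | | apply fourier_abs_double, Hp | | apply Rabs_le; lra].
      - intro u. pose proof (fourier_abs_le_1 _ Hp u). lra.
      - intros u Hu. pose proof (HN n Hn u Hu). lra. }
    pose proof (exp_ineq1_le (- (1 - r) * t ^ 2)). lra.
  - intros [C [HC [N0 H2]]] delta Hd.
    exists (exp (- C * delta ^ 2)). split.
    { rewrite <- exp_0. apply exp_increasing. pose proof (pow_lt delta 2 Hd). nra. }
    exists N0. intros n Hn t Ht.
    assert (Hp : is_prob_Z (nu n)) by (apply Hnu; lia).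
    assert (Hbound : forall u, -(1/2) <= u < 1/2 -> delta < Rabs u ->
                       fourier_abs (nu n) u <= exp (- C * delta ^ 2)).
    { intros u Hu Hdu. apply (Rle_trans _ _ _ (H2 n Hn u Hu)).
      rewrite <- (pow2_abs u). left. apply exp_increasing.
      assert (delta ^ 2 < Rabs u ^ 2) by (simpl; nra).
      apply Ropp_lt_cancel. rewrite <- !Ropp_mult_distr_l, !Ropp_involutive.
      apply Rmult_lt_compat_l; assumption. }
    destruct (Req_dec t (1/2)) as [-> | Ht2].
    + rewrite <- fourier_abs_opp by exact Hp.
      apply Hbound; [lra | rewrite Rabs_Ropp; lra].
    + apply Hbound; [| apply Ht].
      pose proof (Rle_abs t). pose proof (Rle_abs (- t)). rewrite Rabs_Ropp in *. lra.
Qed.
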